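(* Let $\Gamma$ be a simple, undirected, connected graph of order $p$ that contains a cycle, and let $g(\Gamma)$ be its girth. Then $$\gamma_{[3R]}(\Gamma)\le 3p+2-\frac{5g(\Gamma)}{3}.$$
   Context: The girth of a graph is the minimum length of a cycle in it. For a graph $\Gamma=(V,E)$ and $h:V\to\{0,1,2,3,4\}$, let $AN(v)=\{w\in N(v):h(w)\ge 1\}$, $AN[v]=AN(v)\cup\{v\}$ and $h(S)=\sum_{u\in S}h(u)$. $h$ is a triple Roman dominating function (3RDF) if every $v$ with $h(v)<3$ satisfies $h(AN[v])\ge|AN(v)|+3$. The triple Roman domination number $\gamma_{[3R]}(\Gamma)$ is the minimum weight $h(V)$ of a 3RDF of $\Gamma$. *)

From mathcomp Require Import all_boot all_order all_algebra.
Set Implicit Arguments. Unset Strict Implicit. Unset Printing Implicit Defensive.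

Section Graph.
Variable T : finType.
Variable e : rel T.

Definition graph_cycle (s : seq T) : bool :=
  [&& 3 <= size s, uniq s & cycle e s].

Definition has_cycle_len (k : nat) : bool :=
  [exists t : k.-tuple T, graph_cycle t].

(* girth = least length of a cycle (cycles have length <= #|T|);
   equals #|T|.+1 if the graph is acyclic (irrelevant here). *)
Definition girth : nat := find has_cycle_len (iota 0 #|T|.+1).

Definition AN (h : {ffun T -> 'I_5}) (v : T) : {set T} :=
  [set w | e v w && (1 <= h w)].

Definition ANc (h : {ffun T -> 'I_5}) (v : T) : {set T} := v |: AN h v.

Definition weight (h : {ffun T -> 'I_5}) : nat := \sum_(v : T) (h v : nat).

Definition is_3RDF (h : {ffun T -> 'I_5}) : bool :=
  [forall v, (h v < 3) ==> (#|AN h v| + 3 <= \sum_(w in ANc h v) (h w : nat))].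

(* minimum weight of a 3RDF; every h has weight <= 4|T|, so 4|T| is a
   neutral initial value (and the constant-3 function is a 3RDF). *)
Definition triple_roman_domination_number : nat :=
  \big[minn/4 * #|T|]_(h : {ffun T -> 'I_5} | is_3RDF h) weight h.

End Graph.

From mathcomp Require Import all_boot all_order all_algebra.
From mathcomp Require Import zify lra.

Set Implicit Arguments.
Unset Strict Implicit.
Unset Printing Implicit Defensive.
Import Order.TTheory GRing.Theory Num.Theory.

(* Take any cycle v_0 ... v_(n-1); as n is at least the girth g, it suffices to
   exhibit a 3RDF of weight at most 3p + 2 - 5n/3.  Give 3 to every vertex off
   the cycle and label the cycle 4,0,0,4,0,0,...: v_i gets 4 when i = 0 (mod 3)
   and i <= n - 2, v_(n-2) gets 3 when n = 1 (mod 3), all others get 0.  Every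
   0 then has a cycle neighbour labelled 4, which alone meets the 3RDF
   condition, and the cycle carries weight at most (4n + 6)/3. *)

Definition cycle_label (n i : nat) : nat :=
  if (i %% 3 == 0) && (i.+1 < n) then 4
  else if (i.+2 == n) && (n %% 3 == 1) then 3 else 0.

Lemma cycle_label_lt5 n i : cycle_label n i < 5.
Proof. by rewrite /cycle_label; case: ifP => //; case: ifP. Qed.

Lemma cycle_label_eq4 n i : cycle_label n i = 4 <-> i %% 3 = 0 /\ i.+1 < n.
Proof.
rewrite /cycle_label; case: ifP => [/andP[/eqP -> ->] // | /negbT].
by rewrite negb_and; case: ifP => _; split => //; lia.
Qed.

Lemma cycle_label_eq0 n i : cycle_label n i = 0 ->
  ~ (i %% 3 = 0 /\ i.+1 < n) /\ ~ (i.+2 = n /\ n %% 3 = 1).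
Proof.
rewrite /cycle_label; case: ifP => // /negbT; rewrite negb_and => lab4.
by case: ifP => // /negbT; rewrite negb_and => lab3 _; lia.
Qed.

Lemma cycle_label0_neighbor4 n i : 1 < n -> i < n -> cycle_label n i = 0 ->
  cycle_label n (i.+1 %% n) = 4 \/ 0 < i /\ cycle_label n i.-1 = 4.
Proof.
move=> n_gt1 lt_i_n /cycle_label_eq0 lab0; rewrite !cycle_label_eq4.
have [lt_i1_n | ge_i1_n] := ltnP i.+1 n; first by rewrite (modn_small lt_i1_n); lia.
have -> : i.+1 = n by lia.
by rewrite modnn mod0n; lia.
Qed.

Lemma sum_cycle_label_prefix n m :
  \sum_(0 <= i < m) cycle_label n i <=
  4 * ((minn m (n - 1) + 2) %/ 3) + 3 * ((n - 2 < m) && (n %% 3 == 1)).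
Proof.
elim: m => [|m IHm]; first by rewrite big_geq.
rewrite big_nat_recr //=; move: IHm; rewrite /cycle_label.
case: (n %% 3 =P 1); case: (m %% 3 =P 0); case: (m.+2 =P n);
  case: (ltnP m.+1 n); case: (ltnP (n - 2) m); case: (ltnP (n - 2) m.+1) => /=; lia.
Qed.

Lemma sum_cycle_label n : 3 * \sum_(0 <= i < n) cycle_label n i <= 4 * n + 6.
Proof.
have := sum_cycle_label_prefix n n.
by case: (ltnP (n - 2) n); case: (n %% 3 =P 1) => /=; lia.
Qed.

Lemma cycle_nth (T : Type) (r : rel T) s x0 i :
  cycle r s -> i < size s -> r (nth x0 s i) (nth x0 s (i.+1 %% size s)).
Proof.
case: s => [//|y s] /= /(pathP x0)/(_ i) + lt_i_s; rewrite size_rcons => /(_ lt_i_s).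
have -> : nth x0 (y :: rcons s y) i = nth x0 (y :: s) i.
  by case: i lt_i_s => [//|i] /=; rewrite ltnS nth_rcons => ->.
rewrite nth_rcons; case: (ltnP i (size s)) => [i_lt_s | s_le_i].
  by rewrite modn_small.
have -> : i = size s by lia.
by rewrite eqxx modnn.
Qed.

Section TripleRoman.

Variables (T : finType) (e : rel T).

Lemma triple_roman_le_weight (h : {ffun T -> 'I_5}) :
  is_3RDF e h -> triple_roman_domination_number e <= weight h.
Proof.
by rewrite /triple_roman_domination_number -minEnat; exact: (bigmin_le_cond (T := nat)).
Qed.

Lemma AN_weight_neighbor4 (h : {ffun T -> 'I_5}) v w :
  e v w -> (h w : nat) = 4 -> #|AN e h v| + 3 <= \sum_(u in ANc e h v) (h u : nat).
Proof.
move=> vw hw4; have wAN : w \in AN e h v by rewrite inE vw hw4.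
apply: (@leq_trans (\sum_(u in AN e h v) (h u : nat))); last first.
  rewrite [X in _ <= X]big_mkcond [X in X <= _]big_mkcond /=.
  by apply: leq_sum => u _; rewrite /ANc in_setU1; case: (u \in AN e h v); rewrite ?orbT.
rewrite -sum1_card !(bigD1 w wAN) hw4 addnAC leq_add2l.
by apply: leq_sum => u /andP[/setIdP[_ ->]].
Qed.

Section CycleLabelling.

Hypothesis e_sym : symmetric e.
Variable s : seq T.
Hypothesis s_cycle : graph_cycle e s.

Definition cycle_3RDF : {ffun T -> 'I_5} :=
  [ffun v => inord (if v \in s then cycle_label (size s) (index v s) else 3)].

Lemma cycle_3RDFE v :
  (cycle_3RDF v : nat) = if v \in s then cycle_label (size s) (index v s) else 3.
Proof. by rewrite ffunE inordK //; case: ifP => // _; exact: cycle_label_lt5. Qed.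

Lemma cycle_3RDF_nth x0 i :
  i < size s -> (cycle_3RDF (nth x0 s i) : nat) = cycle_label (size s) i.
Proof.
have /and3P[_ s_uniq _] := s_cycle.
by move=> lt_i_s; rewrite cycle_3RDFE mem_nth // index_uniq.
Qed.

Lemma is_3RDF_cycle_3RDF : is_3RDF e cycle_3RDF.
Proof.
have /and3P[s_ge3 s_uniq s_cyc] := s_cycle.
apply/forallP => v; apply/implyP; rewrite cycle_3RDFE; case: ifP => // v_s lab_lt3.
set n := size s in s_ge3 lab_lt3 *; set i := index v s in lab_lt3 *.
have lt_i_n : i < n by rewrite index_mem.
have lab0 : cycle_label n i = 0.
  by move: lab_lt3; rewrite /cycle_label; case: ifP => //; case: ifP.
have v_nth : v = nth v s i by rewrite nth_index.
have n_gt1 : 1 < n by lia.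
have [lab4 | [i_gt0 lab4]] := cycle_label0_neighbor4 n_gt1 lt_i_n lab0.
  apply: (AN_weight_neighbor4 (w := nth v s (i.+1 %% n))).
    by rewrite {1}v_nth; apply: cycle_nth.
  by rewrite cycle_3RDF_nth // ltn_mod; lia.
apply: (AN_weight_neighbor4 (w := nth v s i.-1)); last by rewrite cycle_3RDF_nth //; lia.
have lt_pi_n : i.-1 < n by lia.
by rewrite e_sym; have := cycle_nth v s_cyc lt_pi_n; rewrite prednK // modn_small // -v_nth.
Qed.

Lemma weight_cycle_3RDF : 3 * weight cycle_3RDF + 5 * size s <= 9 * #|T| + 6.
Proof.
have /and3P[_ s_uniq _] := s_cycle.
have [x0 _] : exists x0 : T, x0 \in s.
  by case: s s_cycle => [//|x s' _]; exists x; exact: mem_head.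
have sum_on : \sum_(v | v \in s) (cycle_3RDF v : nat) =
              \sum_(0 <= i < size s) cycle_label (size s) i.
  rewrite -big_uniq // (big_nth x0); apply: eq_big_nat => i /andP[_ lt_i_s].
  exact: cycle_3RDF_nth.
have sum_off : \sum_(v | v \notin s) (cycle_3RDF v : nat) = #|[predC s]| * 3.
  rewrite -sum_nat_const; apply: eq_big => v; rewrite ?inE // => /negbTE v_s.
  by rewrite cycle_3RDFE v_s.
have card_s : size s + #|[predC s]| = #|T| by rewrite -(cardC (mem s)) (card_uniqP s_uniq).
have := sum_cycle_label (size s).
rewrite /weight (bigID (mem s)) /= sum_on sum_off -card_s; lia.
Qed.

Lemma triple_roman_cycle_bound :
  3 * triple_roman_domination_number e + 5 * size s <= 9 * #|T| + 6.
Proof.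
have := triple_roman_le_weight is_3RDF_cycle_3RDF.
by have := weight_cycle_3RDF; lia.
Qed.

End CycleLabelling.

Lemma girth_le_cycle s : graph_cycle e s -> girth e <= size s.
Proof.
move=> s_cycle; have s_le_T : size s <= #|T|.
  by have /and3P[_ /card_uniqP <- _] := s_cycle; exact: max_card.
rewrite -ltnS; apply: find_ltn; apply/hasP; exists (size s).
  by rewrite take_iota mem_iota; lia.
by apply/existsP; exists (in_tuple s).
Qed.

End TripleRoman.

Theorem proposition24 (T : finType) (e : rel T)
  (e_sym : symmetric e) (e_irr : irreflexive e)
  (e_conn : forall x y : T, connect e x y)
  (e_cyc : exists s : seq T, graph_cycle e s) :
  ((triple_roman_domination_number e)%:R <=
     (3 * #|T| + 2)%:R - 5 * (girth e)%:R / 3 :> rat)%R.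
Proof.
have [s s_cycle] := e_cyc.
have bound := triple_roman_cycle_bound e_sym s_cycle.
have g_le_s := girth_le_cycle s_cycle.
have : 3 * triple_roman_domination_number e + 5 * girth e <= 3 * (3 * #|T| + 2).
  by lia.
rewrite -(ler_nat rat) natrD !natrM; lra.
Qed.
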